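(* Let $R$ be a Noetherian ring, let $N\subsetneq M$ be finitely generated $R$-modules, and let $X\subseteq\operatorname{Ass}(M/N)$. Then the primary decompositions of $N$ in $M$ are independent over $X$ if and only if $X$ is an open subset of $\operatorname{Ass}(M/N)$, where $\operatorname{Ass}(M/N)$ carries the subspace topology induced from the Zariski topology on $\operatorname{Spec}(R)$.
   Context: A submodule $Q\subseteq M$ is $P$-primary if $\operatorname{Ass}(M/Q)=\{P\}$. A primary decomposition of $N$ in $M$ means an irredundant and minimal primary decomposition $N=Q_1\cap\cdots\cap Q_s$ with $Q_i$ being $P_i$-primary, the $P_i$ distinct, so $\operatorname{Ass}(M/N)=\{P_1,\dots,P_s\}$; $Q_i$ is called a $P_i$-primary component of $N$ in $M$, and $\Lambda_{P}(N\subsetneq M)$ is the set of all $P$-primary components of $N$ in $M$ (over all such decompositions). Writing $X=\{P_1,\dots,P_r\}$ with $\operatorname{Ass}(M/N)=\{P_1,\dots,P_s\}$, the primary decompositions of $N$ in $M$ are called independent over $X$ if for any two primary decompositions $N=Q_1\cap\cdots\cap Q_s=Q_1'\cap\cdots\cap Q_s'$ with $Q_i,Q_i'\in\Lambda_{P_i}(N\subsetneq M)$ for all $i$, one has $Q_1\cap\cdots\cap Q_r=Q_1'\cap\cdots\cap Q_r'$. *)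

From HB Require Import structures.
From mathcomp Require Import all_boot all_algebra.
From mathcomp Require Import boolp classical_sets.
Set Implicit Arguments. Unset Strict Implicit. Unset Printing Implicit Defensive.
Import GRing.Theory.
Local Open Scope ring_scope.
Local Open Scope classical_set_scope.

Section CommAlg.
Variable R : comNzRingType.

Definition is_ideal (I : set R) : Prop :=
  I 0 /\ (forall x y, I x -> I y -> I (x + y)) /\ (forall r x, I x -> I (r * x)).

Definition prime_ideal (P : set R) : Prop :=
  is_ideal P /\ ~ P 1 /\ (forall a b, P (a * b) -> P a \/ P b).

Definition fin_gen_ideal (I : set R) : Prop :=
  exists s : seq R, forall x,
    I x <-> exists c : 'I_(size s) -> R, x = \sum_(i < size s) c i * s`_i.

Definition noetherian_ring : Prop := forall I, is_ideal I -> fin_gen_ideal I.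

(* Zariski topology on Spec R: open sets are D(S) = {P | ~ S <= P}.
   X is open in the subspace A of Spec R. *)
Definition zariski_open_in (A X : set (set R)) : Prop :=
  exists S : set R, X = A `&` [set P | ~ (S `<=` P)].

Variable M : lmodType R.

Definition is_submodule (N : set M) : Prop :=
  N 0 /\ (forall x y, N x -> N y -> N (x + y)) /\ (forall r x, N x -> N (r *: x)).

Definition fin_gen_submodule (N : set M) : Prop :=
  exists s : seq M, forall x,
    N x <-> exists c : 'I_(size s) -> R, x = \sum_(i < size s) c i *: s`_i.

Definition fin_gen_module : Prop := fin_gen_submodule [set: M].

(* (N :_R m) = Ann_R (m + N) in M/N *)
Definition colon (N : set M) (m : M) : set R := [set r | N (r *: m)].

Definition Ass (N : set M) : set (set R) :=
  [set P | prime_ideal P /\ exists m : M, P = colon N m].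

Definition primary_for (P : set R) (Q : set M) : Prop :=
  is_submodule Q /\ Ass Q = [set P].

Definition primary_decomposition (N : set M) (s : nat)
    (P : 'I_s -> set R) (Q : 'I_s -> set M) : Prop :=
  [/\ forall i, primary_for (P i) (Q i),
      injective P,
      N = \bigcap_(i in [set: 'I_s]) Q i &
      forall j, N <> \bigcap_(i in [set i | i <> j]) Q i].

Definition Lambda (P : set R) (N : set M) : set (set M) :=
  [set Q0 | exists s (Pf : 'I_s -> set R) (Qf : 'I_s -> set M),
     primary_decomposition N Pf Qf /\ exists i, Pf i = P /\ Qf i = Q0].

Definition independent_over (N : set M) (X : set (set R)) : Prop :=
  forall s (P : 'I_s -> set R) (Q Q' : 'I_s -> set M),
    primary_decomposition N P Q -> primary_decomposition N P Q' ->
    (forall i, Lambda (P i) N (Q i)) -> (forall i, Lambda (P i) N (Q' i)) ->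
    \bigcap_(i in [set i | X (P i)]) Q i = \bigcap_(i in [set i | X (P i)]) Q' i.

End CommAlg.

(* Fix a primary decomposition N = Q_1 `&` ... `&` Q_s with Q_i P_i-primary.
   If X = Ass(M/N) `&` D(S) is open, the X-part of any decomposition is
   { m | (N : m) is contained in no prime of X }: a prime P of X containing
   (N : m) contains some (Q_i : m), hence P_i; P_i in X is impossible as m
   lies in Q_i, and P_i outside X gives S <= P_i <= P.  This set does not
   depend on the decomposition.
   Conversely, Ass(M/N) being finite, X is open as soon as it is closed under
   generisation.  If P_b <= P_a with P_a in X and P_b not in X, irredundancy
   of Q_b yields an m of the X-part outside some P_a-primary Q' containing N
   (otherwise the X-part lies in the intersection of all such Q', which is
   contained in S_{P_a}(N), hence in Q_b); replacing Q_a by Q_a `&` Q' gives a second decomposition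
   whose X-part misses m. *)

From HB Require Import structures.
From mathcomp Require Import all_boot all_algebra.
From mathcomp Require Import boolp classical_sets.
Set Implicit Arguments. Unset Strict Implicit. Unset Printing Implicit Defensive.
Import GRing.Theory.
Local Open Scope ring_scope.
Local Open Scope classical_set_scope.

Fixpoint ispan (R : comNzRingType) (V : lmodType R) (I : set R) (s : seq V) : set V :=
  if s is h :: t then [set x | exists r y, I r /\ ispan I t y /\ x = r *: h + y]
  else [set 0].

Notation span := (ispan setT).

Section Submodules.
Variables (R : comNzRingType) (V : lmodType R).
Implicit Types (I : set R) (A B L : set V) (s : seq V).

Lemma scaler_comm a b (v : V) : a *: (b *: v) = b *: (a *: v).
Proof. by rewrite !scalerA mulrC. Qed.

Lemma submod0 L : is_submodule L -> L 0.
Proof. by case. Qed.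

Lemma submodD L x y : is_submodule L -> L x -> L y -> L (x + y).
Proof. by case=> _ [+ _]; apply. Qed.

Lemma submodZ L r x : is_submodule L -> L x -> L (r *: x).
Proof. by case=> _ [_]; apply. Qed.

Lemma submodB L x y : is_submodule L -> L x -> L y -> L (x - y).
Proof. by move=> hL Lx Ly; rewrite -scaleN1r; apply: submodD (submodZ _ _ _). Qed.

Lemma submodI L1 L2 :
  is_submodule L1 -> is_submodule L2 -> is_submodule (L1 `&` L2).
Proof.
move=> h1 h2; split; first by split; apply: submod0.
split=> [x y [x1 x2] [y1 y2]|r x [x1 x2]]; split.
- exact: submodD h1 x1 y1.
- exact: submodD h2 x2 y2.
- exact: submodZ h1 x1.
- exact: submodZ h2 x2.
Qed.

Definition addsub A B := [set x | exists a b, A a /\ B b /\ x = a + b].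

Lemma addsub_submodule A B :
  is_submodule A -> is_submodule B -> is_submodule (addsub A B).
Proof.
move=> hA hB; split; first by exists 0, 0; rewrite addr0; do !split; apply: submod0.
split=> [x y [a1 [b1 [A1 [B1 ->]]]] [a2 [b2 [A2 [B2 ->]]]]|r x [a [b [Aa [Bb ->]]]]].
  by exists (a1 + a2), (b1 + b2); rewrite addrACA; do !split; apply: submodD.
by exists (r *: a), (r *: b); rewrite scalerDr; do !split; apply: submodZ.
Qed.

Lemma addsub_sub A B L : is_submodule L -> A `<=` L -> B `<=` L -> addsub A B `<=` L.
Proof. by move=> hL AL BL x [a [b [/AL La [/BL Lb ->]]]]; apply: submodD. Qed.

Lemma idealT : is_ideal (@setT R).
Proof. by []. Qed.

Lemma ispan_submodule I s : is_ideal I -> is_submodule (ispan I s).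
Proof.
move=> [I0 [ID IZ]]; elim: s => [|h t [t0 [tD tZ]]] /=.
  by split=> //; split=> [x y -> ->|r x ->]; rewrite ?addr0 ?scaler0.
split; first by exists 0, 0; rewrite scale0r addr0.
split=> [x y [a [u [Ia [tu ->]]]] [b [v [Ib [tv ->]]]]|c x [a [u [Ia [tu ->]]]]].
  by exists (a + b), (u + v); rewrite scalerDl addrACA; split; [exact: ID|split; [exact: tD|]].
by exists (c * a), (c *: u); rewrite scalerDr scalerA; split; [exact: IZ|split; [exact: tZ|]].
Qed.

Lemma ispan_sub I L s :
  is_submodule L -> (forall y, y \in s -> L y) -> ispan I s `<=` L.
Proof.
move=> hL; elim: s => [|h t IH] sL x /=; first by move->; apply: submod0.
case=> r [y [_ [ty ->]]]; apply: submodD (submodZ _ hL _) _ => //.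
  by apply: sL; rewrite mem_head.
by apply: IH ty => z zt; apply: sL; rewrite in_cons zt orbT.
Qed.

Lemma ispan_cat I s1 s2 u v :
  ispan I s1 u -> ispan I s2 v -> ispan I (s1 ++ s2) (u + v).
Proof.
elim: s1 u => [|h t IH] u /=; first by move-> => ?; rewrite add0r.
case=> r [y [Ir [ty ->]]] s2v; exists r, (y + v).
by rewrite addrA; split=> //; split=> //; apply: IH.
Qed.

Lemma ispan_scale I s r x :
  is_ideal I -> I r -> span s x -> ispan I s (r *: x).
Proof.
move=> [_ [_ IZ]] Ir; elim: s x => [|h t IH] x /=; first by move->; rewrite scaler0.
case=> c [y [_ [ty ->]]]; exists (c * r), (r *: y).
by rewrite scalerDr scalerA [r * c]mulrC; split; [exact: IZ|split=> //; exact: IH].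
Qed.

Lemma span_submodule s : is_submodule (span s).
Proof. exact: ispan_submodule idealT. Qed.

Lemma span_mem s y : y \in s -> span s y.
Proof.
elim: s => [|h t IH] //; rewrite in_cons => /orP[/eqP->|yt] /=.
  exists 1, 0; rewrite scale1r addr0; split=> //; split=> //.
  exact: submod0 (span_submodule t).
by exists 0, y; rewrite scale0r add0r; split=> //; split=> //; apply: IH.
Qed.

Lemma spanE s x :
  (exists c : 'I_(size s) -> R, x = \sum_(i < size s) c i *: s`_i) <-> span s x.
Proof.
elim: s x => [|h t IH] x /=.
  split=> [[c ->]|->]; first by rewrite big_ord0.
  by exists (fun=> 0); rewrite big_ord0.
split=> [[c ->]|[r [y [_ [/IH [c ->] ->]]]]].
  rewrite big_ord_recl; exists (c ord0), (\sum_(i < size t) c (lift ord0 i) *: t`_i).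
  by split=> //; split=> //; apply/IH; exists (fun i => c (lift ord0 i)).
exists (fun i => if unlift ord0 i is Some j then c j else r).
by rewrite big_ord_recl unlift_none; congr (_ + _); apply: eq_bigr => i _; rewrite liftK.
Qed.

Lemma fin_gen_submoduleP L : fin_gen_submodule L <-> exists s, L = span s.
Proof.
split=> [[s hs]|[s ->]]; exists s; last by move=> x; rewrite spanE.
by apply/seteqP; split=> x; rewrite /= -spanE => /hs.
Qed.

End Submodules.

Definition noetherian_module (R : comNzRingType) (V : lmodType R) :=
  forall L : set V, is_submodule L -> fin_gen_submodule L.

Section NoetherianModule.
Variables (R : comNzRingType) (V : lmodType R).
Hypothesis noethV : noetherian_module V.

Lemma chain_seq_bound (c : nat -> set V) (s : seq V) :
  (forall n, c n `<=` c n.+1) -> (forall y, y \in s -> exists n, c n y) ->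
  exists n, forall y, y \in s -> c n y.
Proof.
move=> /(homo_leq (@subset_refl _) (fun _ _ _ => @subset_trans _ _ _ _)) c_mono.
elim: s => [|h t IH] hs; first by exists 0%N.
have [n cnh] := hs h (mem_head _ _).
have [|m cmt] := IH; first by move=> y yt; apply: hs; rewrite in_cons yt orbT.
exists (maxn n m) => y; rewrite in_cons => /orP[/eqP->|yt].
  exact: c_mono (leq_maxl n m) _ cnh.
exact: c_mono (leq_maxr n m) _ (cmt y yt).
Qed.

Lemma noetherian_chain_stationary (c : nat -> set V) :
  (forall n, is_submodule (c n)) -> (forall n, c n `<=` c n.+1) ->
  exists n, forall k, c k `<=` c n.
Proof.
move=> c_sub c_incr; pose U := [set x | exists n, c n x].
have U_sub : is_submodule U.
  have c_mono := homo_leq (@subset_refl _) (fun _ _ _ => @subset_trans _ _ _ _) c_incr.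
  split; first by exists 0%N; apply: submod0.
  split=> [x y [n cnx] [m cmy]|r x [n cnx]]; last by exists n; apply: submodZ.
  exists (maxn n m); apply: submodD (c_sub _) _ _.
    exact: c_mono (leq_maxl n m) _ cnx.
  exact: c_mono (leq_maxr n m) _ cmy.
have /fin_gen_submoduleP [s U_span] := noethV U_sub.
have [|n hn] := chain_seq_bound c_incr (s := s).
  by move=> y /span_mem; rewrite -U_span.
exists n => k x ckx; have : U x by exists k.
by rewrite U_span; apply: ispan_sub (c_sub n) hn x.
Qed.

Lemma noetherian_maximal (F : set (set V)) :
  (forall A, F A -> is_submodule A) -> (exists A, F A) ->
  exists A, F A /\ forall B, F B -> A `<=` B -> B `<=` A.
Proof.
move=> F_sub [A0 FA0]; apply: contrapT => no_max.
have grow A : F A -> exists B, F B /\ A `<=` B /\ ~ B `<=` A.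
  move=> FA; apply: contrapT => hB; apply: no_max; exists A; split=> // B FB AB.
  by apply: contrapT => BA; apply: hB; exists B.
pose g A := if pselect (F A) is left FA then sval (cid (grow A FA)) else A.
have gP A : F A -> F (g A) /\ A `<=` g A /\ ~ g A `<=` A.
  by rewrite /g; case: pselect => // FA _; exact: svalP (cid (grow A FA)).
pose c n := iter n g A0.
have Fc n : F (c n) by elim: n => //= n IH; case: (gP _ IH).
have [n hn] := noetherian_chain_stationary (fun n => F_sub _ (Fc n))
  (fun n => (gP _ (Fc n)).2.1).
by case: (gP _ (Fc n)) => _ [_]; apply; apply: (hn n.+1).
Qed.

End NoetherianModule.

Section FinGenNoetherian.
Variables (R : comNzRingType) (M : lmodType R).
Hypothesis noethR : noetherian_ring R.

Lemma noetherian_ring_module : noetherian_module R^o.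
Proof. exact: noethR. Qed.

Lemma lift_span_coef (L : set M) h t (rs : seq R^o) :
  (forall r, r \in rs -> exists l, L l /\ span t (l - r *: h)) ->
  exists w, (forall l, l \in w -> L l) /\
    forall r, span rs r -> exists2 z, span w z & span t (z - r *: h).
Proof.
elim: rs => [|a rs IH] hrs.
  exists [::]; split=> // r /= ->; exists 0 => //.
  by rewrite scale0r subr0; apply: submod0 (span_submodule t).
have [l [La tla]] := hrs a (mem_head _ _).
have [|w [wL hw]] := IH; first by move=> r rs_r; apply: hrs; rewrite in_cons rs_r orbT.
exists (l :: w); split=> [y|r /= [c [r' [_ [rs_r' ->]]]]].
  by rewrite in_cons => /orP[/eqP->|/wL].
have [z wz tz] := hw r' rs_r'.
exists (c *: l + z); first by exists c, z.
have -> : c *: l + z - (c * a + r') *: h = c *: (l - a *: h) + (z - r' *: h).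
  by rewrite scalerBr scalerA scalerDl opprD addrACA.
exact: submodD (span_submodule t) (submodZ _ (span_submodule t) tla) tz.
Qed.

(* Induction on [g = h :: t]: the coefficients of [h] in the elements of [L]
   form an ideal, finitely generated as [R] is Noetherian; lifts of its
   generators to [L], together with generators of [L `&` span t], generate [L]. *)
Lemma span_submodule_fin_gen (g : seq M) (L : set M) :
  is_submodule L -> L `<=` span g -> exists s, L = span s.
Proof.
elim: g L => [|h t IH] L L_sub Lg.
  by exists [::]; apply/seteqP; split=> [x /Lg //|x /= ->]; exact: submod0.
pose I : set R^o := [set r | exists l, L l /\ span t (l - r *: h)].
have t_sub := span_submodule t.
have I_sub : is_submodule I.
  split; first by exists 0; rewrite scale0r subr0; split; apply: submod0.
  split=> [x y [l1 [L1 t1]] [l2 [L2 t2]]|a x [l [Ll tl]]].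
    exists (l1 + l2); split; first exact: submodD.
    by rewrite scalerDl opprD addrACA; apply: submodD.
  exists (a *: l); split; first exact: submodZ.
  by rewrite -scalerA -scalerBr; apply: submodZ.
have /fin_gen_submoduleP [rs I_span] := noetherian_ring_module I_sub.
have [|w [wL hw]] := @lift_span_coef L h t rs.
  by move=> r /span_mem; rewrite -I_span.
have [s' Lt_span] := IH (L `&` span t) (submodI L_sub t_sub) (fun x => @proj2 _ _).
exists (w ++ s'); apply/seteqP; split=> [x Lx|]; last first.
  apply: ispan_sub L_sub _ => y; rewrite mem_cat => /orP[/wL //|/span_mem].
  by rewrite -Lt_span => -[].
have [r [y [_ [ty xE]]]] := Lg x Lx.
have [|z wz tz] := hw r.
  by rewrite -I_span; exists x; split=> //; rewrite xE addrC addKr.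
have Lz : L z := ispan_sub L_sub wL wz.
have -> : x = z + (x - z) by rewrite addrC subrK.
apply: ispan_cat wz _; rewrite -Lt_span; split; first exact: submodB.
have -> : x - z = y - (z - r *: h) by rewrite xE opprB addrCA addrA addrC.
exact: submodB.
Qed.

Lemma fin_gen_noetherian : fin_gen_module M -> noetherian_module M.
Proof.
move=> /fin_gen_submoduleP [g Mg] L L_sub; apply/fin_gen_submoduleP.
by apply: (@span_submodule_fin_gen g) L_sub _ => x _; rewrite -Mg.
Qed.

End FinGenNoetherian.

Section Colon.
Variables (R : comNzRingType) (M : lmodType R).
Implicit Types (N Q : set M) (P : set R).

Lemma colon_ideal N m : is_submodule N -> is_ideal (colon N m).
Proof.
move=> hN; split; first by rewrite /colon /= scale0r; apply: submod0.
split=> [x y hx hy|r x hx]; rewrite /colon /=; first by rewrite scalerDl; apply: submodD.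
by rewrite -scalerA; apply: submodZ.
Qed.

Lemma colon_bigcap s (Q : 'I_s -> set M) (D : set 'I_s) m :
  colon (\bigcap_(i in D) Q i) m = \bigcap_(i in D) colon (Q i) m.
Proof. by []. Qed.

Lemma prime_neq1 P : prime_ideal P -> ~ P 1.
Proof. by case=> _ []. Qed.

Lemma prime_mulN P u v : prime_ideal P -> ~ P u -> ~ P v -> ~ P (u * v).
Proof. by move=> [_ [_ hP]] Pu Pv /hP[]. Qed.

Lemma prime_expn P y k : prime_ideal P -> P (y ^+ k) -> P y.
Proof.
move=> hP; elim: k => [|k IH]; first by rewrite expr0 => /(prime_neq1 hP).
by rewrite exprS; case: hP => _ [_ hP] /hP[].
Qed.

Lemma prime_bigcap_sub P s (J : 'I_s -> set R) (D : set 'I_s) :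
  prime_ideal P -> (forall i, D i -> is_ideal (J i)) ->
  \bigcap_(i in D) J i `<=` P -> exists i, D i /\ J i `<=` P.
Proof.
move=> hP J_ideal JP; apply: contrapT => no_sub.
have outside i : exists r, (D i -> J i r) /\ ~ P r.
  have [Di|nDi] := pselect (D i); last by exists 1; split=> //; apply: prime_neq1.
  apply: contrapT => hr; apply: no_sub; exists i; split=> // y Jy.
  by apply: contrapT => Py; apply: hr; exists y.
pose g i := sval (cid (outside i)).
have gP i : (D i -> J i (g i)) /\ ~ P (g i) := svalP (cid (outside i)).
have : ~ P (\prod_i g i).
  by elim: (index_enum _) => [|i r IH]; rewrite ?big_nil ?big_cons;
    [apply: prime_neq1|apply: prime_mulN => //; apply: (gP i).2].
apply; apply: JP => i Di; rewrite (bigD1 i) //= mulrC.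
by have [_ [_ JZ]] := J_ideal i Di; apply/JZ/(gP i).1.
Qed.

Lemma prime_colon_notin N m : prime_ideal (colon N m) -> ~ N m.
Proof. by move=> /prime_neq1; rewrite /colon /= scale1r. Qed.

Lemma primary_Ass_eq P Q J : primary_for P Q -> Ass Q J -> J = P.
Proof. by case=> _ ->. Qed.

Lemma primary_Ass_mem P Q : primary_for P Q -> Ass Q P.
Proof. by case=> _ ->. Qed.

Lemma primary_prime P Q : primary_for P Q -> prime_ideal P.
Proof. by move=> /primary_Ass_mem []. Qed.

Lemma primary_proper P Q : primary_for P Q -> exists m, ~ Q m.
Proof.
by move=> /primary_Ass_mem [+ [m Pm]]; rewrite Pm => /prime_colon_notin; exists m.
Qed.

Lemma Ass_bigcap_primary N s (P : 'I_s -> set R) (Q : 'I_s -> set M) (D : set 'I_s) :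
  (forall i, D i -> primary_for (P i) (Q i)) -> N = \bigcap_(i in D) Q i ->
  forall P0, Ass N P0 -> exists i, D i /\ P0 = P i.
Proof.
move=> Q_prim -> P0 [P0_prime [m P0E]].
have [i [Di Qi_sub]] : exists i, D i /\ colon (Q i) m `<=` P0.
  apply: prime_bigcap_sub P0_prime _ _; last by rewrite -colon_bigcap P0E.
  by move=> i Di; apply: colon_ideal (Q_prim i Di).1.
exists i; split=> //; apply: primary_Ass_eq (Q_prim i Di) _; split=> //; exists m.
by apply/seteqP; split=> // x; rewrite P0E => /(_ i Di).
Qed.

End Colon.

Section Primary.
Variables (R : comNzRingType) (M : lmodType R).
Hypothesis noethR : noetherian_ring R.
Implicit Types (N Q : set M) (P : set R).

Lemma Ass_colon_scale Q m : is_submodule Q -> ~ Q m ->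
  exists r, ~ Q (r *: m) /\ Ass Q (colon Q (r *: m)).
Proof.
move=> Q_sub Qm.
pose F := [set J : set R | exists r, ~ Q (r *: m) /\ J = colon Q (r *: m)].
have [_ [[r [Qrm ->]] Jmax]] : exists J, F J /\ forall B, F B -> J `<=` B -> B `<=` J.
  apply: (noetherian_maximal (noetherian_ring_module noethR)).
    by move=> J [r [_ ->]]; apply: colon_ideal.
  by exists (colon Q (1 *: m)), 1; rewrite scale1r.
exists r; split=> //; split; last by exists (r *: m).
split; first exact: colon_ideal.
split=> [|a b Qab]; first by rewrite /colon /= scale1r.
have [Qa|Qa] := pselect (colon Q (r *: m) a); [by left|right].
have Fa : F (colon Q ((a * r) *: m)) by exists (a * r); rewrite -scalerA.
suff sub : colon Q (r *: m) `<=` colon Q ((a * r) *: m).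
  by apply: (Jmax _ Fa sub); rewrite /colon /= scalerA mulrA [b * a]mulrC -scalerA.
by move=> x Qx; rewrite /colon /= !scalerA mulrCA -!scalerA; apply: submodZ.
Qed.

Lemma primary_cancel P Q u m : primary_for P Q -> ~ P u -> Q (u *: m) -> Q m.
Proof.
move=> Q_prim Pu Qum; apply: contrapT => Qm.
have [r [_ /(primary_Ass_eq Q_prim) PE]] := Ass_colon_scale Q_prim.1 Qm.
by apply: Pu; rewrite -PE /colon /= scalerA mulrC -scalerA; apply: submodZ Q_prim.1 _.
Qed.

Lemma primary_nilpotent P Q x m : primary_for P Q -> P x -> exists k, Q (x ^+ k *: m).
Proof.
move=> Q_prim Px; pose c k := colon Q (x ^+ k *: m).
have c_incr k : c k `<=` c k.+1.
  move=> y cy; rewrite /c /colon /= exprS -scalerA (scaler_comm y x).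
  exact: submodZ Q_prim.1 _.
have [n hn] := noetherian_chain_stationary (noetherian_ring_module noethR)
  (fun k => colon_ideal _ Q_prim.1) c_incr.
exists n; apply: contrapT => Qxm.
have [r [Qr /(primary_Ass_eq Q_prim) PE]] := Ass_colon_scale Q_prim.1 Qxm.
apply: Qr; apply: (hn n.+1 r); move: Px.
by rewrite -PE /c /colon /= exprS -scalerA (scaler_comm r x).
Qed.

Lemma primary_colon_sub P Q P0 m :
  primary_for P Q -> prime_ideal P0 -> colon Q m `<=` P0 -> P `<=` P0.
Proof.
move=> Q_prim P0_prime QP0 y Py; have [k Qyk] := primary_nilpotent m Q_prim Py.
exact: prime_expn P0_prime (QP0 _ Qyk).
Qed.

Lemma primary_setI P Q1 Q2 :
  primary_for P Q1 -> primary_for P Q2 -> primary_for P (Q1 `&` Q2).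
Proof.
move=> h1 h2; have Q12_sub := submodI h1.1 h2.1.
have Ass_sub P0 : Ass (Q1 `&` Q2) P0 -> P0 = P.
  move=> [P0_prime [m P0E]].
  have [Q1_sub|/existsPNP [a Q1a P0a]] := pselect (colon Q1 m `<=` P0).
    apply: (primary_Ass_eq h1); split=> //; exists m; apply/seteqP; split=> // x.
    by rewrite P0E => -[].
  apply: (primary_Ass_eq h2); split=> //; exists m; apply/seteqP; split=> x.
    by rewrite P0E => -[].
  move=> Q2x; have : P0 (a * x).
    rewrite P0E; split; rewrite /colon /= -scalerA.
      by rewrite scaler_comm; apply: submodZ h1.1 _.
    exact: submodZ h2.1 _.
  by case: P0_prime => _ [_ hP] /hP[].
split=> //; apply/seteqP; split=> [P0 /Ass_sub -> //|_ ->].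
have [m Q1m] := primary_proper h1.
have [r [_ Ass_r]] := Ass_colon_scale Q12_sub (fun Q12m => Q1m Q12m.1).
by rewrite -(Ass_sub _ Ass_r).
Qed.

Lemma primary_decomposition_Ass N s (P : 'I_s -> set R) (Q : 'I_s -> set M) :
  primary_decomposition N P Q -> forall j, Ass N (P j).
Proof.
move=> [Q_prim _ NE N_irr] j.
have [m [Qm Nm]] : exists m, (\bigcap_(i in [set i | i <> j]) Q i) m /\ ~ N m.
  apply: contrapT => hn; apply: (N_irr j); apply/seteqP; split=> [x|x Qx].
    by rewrite NE => Nx i _; apply: Nx.
  by apply: contrapT => Nx; apply: hn; exists x.
have Qjm : ~ Q j m.
  move=> Qjm; apply: Nm; rewrite NE => i _.
  by have [->|ij] := pselect (i = j); last apply: Qm.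
have [r [_ Ass_r]] := Ass_colon_scale (Q_prim j).1 Qjm.
split; first exact: primary_prime (Q_prim j).
exists (r *: m); rewrite -(primary_Ass_eq (Q_prim j) Ass_r).
apply/seteqP; split=> x; rewrite /colon /= NE; last by apply.
move=> Qjx i _; have [->|ij] := pselect (i = j) => //.
by apply: submodZ (Q_prim i).1 _; apply: submodZ (Q_prim i).1 _; apply: Qm.
Qed.

End Primary.

Section Existence.
Variables (R : comNzRingType) (M : lmodType R).
Hypothesis noethR : noetherian_ring R.
Implicit Types (F G : set M).

Definition decomposable F s := exists (P : 'I_s -> set R) (Q : 'I_s -> set M),
  (forall i, primary_for (P i) (Q i)) /\ F = \bigcap_(i in [set: 'I_s]) Q i.

Lemma decomposable_setI F G s1 s2 :
  decomposable F s1 -> decomposable G s2 -> decomposable (F `&` G) (s1 + s2).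
Proof.
move=> [P1 [Q1 [Q1_prim ->]]] [P2 [Q2 [Q2_prim ->]]].
exists (fun i => match split i with inl j => P1 j | inr j => P2 j end).
exists (fun i => match split i with inl j => Q1 j | inr j => Q2 j end).
split=> [i|]; first by case: (split i).
apply/seteqP; split=> x.
  by move=> [x1 x2] i _; case: (split i) => j; [apply: x1|apply: x2].
move=> x12; split=> j _.
  by have := x12 (lshift s2 j) I; rewrite (unsplitK (inl _ j)).
by have := x12 (rshift s1 j) I; rewrite (unsplitK (inr _ j)).
Qed.

Lemma decomposable_merge F s (P : 'I_s.+1 -> set R) (Q : 'I_s.+1 -> set M) i j :
  (forall k, primary_for (P k) (Q k)) -> F = \bigcap_(k in [set: 'I_s.+1]) Q k ->
  i <> j -> P i = P j -> decomposable F s.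
Proof.
move=> Q_prim -> ij Pij.
have [k iE] : exists k, i = lift j k by case: (unliftP j i) => [k ->|//]; exists k.
exists (P \o lift j), (fun l => if l == k then Q i `&` Q j else Q (lift j l)).
split=> [l|] /=.
  case: eqP => [->|_]; last exact: Q_prim.
  by rewrite -iE; apply: (primary_setI noethR (Q_prim i)); rewrite Pij.
apply/seteqP; split=> x Qx l _.
  by case: eqP => _; [split; apply: Qx|apply: Qx].
case: (unliftP j l) => [l' ->|->].
  by have := Qx l' I; case: eqP => [-> []|//]; rewrite -iE.
by have := Qx k I; rewrite eqxx => -[].
Qed.

Lemma decomposable_drop F s (P : 'I_s.+1 -> set R) (Q : 'I_s.+1 -> set M) j :
  (forall k, primary_for (P k) (Q k)) -> F = \bigcap_(i in [set i | i <> j]) Q i ->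
  decomposable F s.
Proof.
move=> Q_prim ->; exists (P \o lift j), (Q \o lift j); split=> [k|]; first exact: Q_prim.
apply/seteqP; split=> x Qx i /=.
  by move=> _; apply: Qx => /esym/eqP; rewrite (negbTE (neq_lift j i)).
by move=> ij; case: (unliftP j i) => [k ->|/ij//]; apply: Qx.
Qed.

Definition add_line G m := [set x | exists f c, G f /\ x = f + c *: m].

Lemma add_line_submodule G m : is_submodule G -> is_submodule (add_line G m).
Proof.
move=> G_sub; split; first by exists 0, 0; rewrite scale0r addr0; split=> //; apply: submod0.
split=> [x y [f1 [c1 [Gf1 ->]]] [f2 [c2 [Gf2 ->]]]|a x [f [c [Gf ->]]]].
  by exists (f1 + f2), (c1 + c2); rewrite scalerDl addrACA; split=> //; apply: submodD.
by exists (a *: f), (a * c); rewrite scalerDr scalerA; split=> //; apply: submodZ.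
Qed.

Lemma sub_add_line G m : is_submodule G -> G `<=` add_line G m.
Proof. by move=> G_sub x Gx; exists x, 0; rewrite scale0r addr0. Qed.

Lemma add_line_mem G m : is_submodule G -> add_line G m m.
Proof. by move=> G_sub; exists 0, 1; rewrite scale1r add0r; split=> //; apply: submod0. Qed.

Lemma colon_scale_prime G m r : is_submodule G -> prime_ideal (colon G m) ->
  ~ G (r *: m) -> colon G (r *: m) = colon G m.
Proof.
move=> G_sub [_ [_ Gm_prime]] Grm; apply/seteqP; split=> y; rewrite /colon /=.
  by rewrite scalerA mulrC => /Gm_prime[].
by rewrite scaler_comm; apply: submodZ.
Qed.

Lemma colon_addl G f v : is_submodule G -> G f -> colon G (f + v) = colon G v.
Proof.
move=> G_sub Gf; apply/seteqP; split=> y; rewrite /colon /= scalerDr => Gy.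
  have -> : y *: v = y *: f + y *: v - y *: f by rewrite addrC addKr.
  exact: submodB G_sub Gy (submodZ _ G_sub Gf).
exact: submodD G_sub (submodZ _ G_sub Gf) Gy.
Qed.

Lemma add_line_setI G m1 m2 : is_submodule G ->
  prime_ideal (colon G m1) -> prime_ideal (colon G m2) -> colon G m1 <> colon G m2 ->
  G = add_line G m1 `&` add_line G m2.
Proof.
move=> G_sub m1_prime m2_prime m12; apply/seteqP; split=> [x Gx|x].
  by split; apply: sub_add_line.
move=> [[f1 [c1 [Gf1 xE1]]] [f2 [c2 [Gf2 xE2]]]]; apply: contrapT => Gx.
have Gm1 : ~ G (c1 *: m1) by move=> h; apply: Gx; rewrite xE1; apply: submodD.
have Gm2 : ~ G (c2 *: m2) by move=> h; apply: Gx; rewrite xE2; apply: submodD.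
apply: m12; rewrite -(colon_scale_prime G_sub m1_prime Gm1).
rewrite -(colon_scale_prime G_sub m2_prime Gm2) -(colon_addl (c1 *: m1) G_sub Gf1).
by rewrite -(colon_addl (c2 *: m2) G_sub Gf2) -xE1 -xE2.
Qed.

Hypothesis fgM : fin_gen_module M.

(* Noether's argument: a maximal counterexample [G] has an associated prime
   [colon G m1]; it is not primary, so there is a second one [colon G m2], and
   [G] is the intersection of the two larger submodules [G + R m1], [G + R m2]. *)
Lemma decomposable_exists F : is_submodule F -> (exists m, ~ F m) ->
  exists s, decomposable F s.
Proof.
move=> F_sub F_proper; apply: contrapT => F_nodec.
pose C := [set G | [/\ is_submodule G, exists m, ~ G m & ~ exists s, decomposable G s]].
have [G [[G_sub [m Gm] G_nodec] Gmax]] :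
    exists G, C G /\ forall B, C B -> G `<=` B -> B `<=` G.
  by apply: (noetherian_maximal (fin_gen_noetherian noethR fgM)) => [A []|]; last exists F.
have dec_line m1 m2 : ~ G m1 -> ~ G m2 -> G = add_line G m1 `&` add_line G m2 ->
    exists s, decomposable (add_line G m1) s.
  move=> Gm1 Gm2 GE; apply: contrapT => nodec; apply: Gm1.
  have proper : exists y, ~ add_line G m1 y.
    apply: contrapT => /forallNP full; apply: Gm2; rewrite GE; split.
      by apply: contrapT => /full.
    exact: add_line_mem.
  apply: (Gmax _ _ (sub_add_line m1 G_sub)); last exact: add_line_mem.
  by split=> //; apply: add_line_submodule.
have [r [Grm [m1_prime _]]] := Ass_colon_scale noethR G_sub Gm.
set m1 := r *: m in Grm m1_prime.
have [AssE|AssN] := pselect (Ass G = [set colon G m1]).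
  apply: G_nodec; exists 1%N, (fun=> colon G m1), (fun=> G).
  split; first by move=> _; split.
  by apply/seteqP; split=> [x Gx i _ //|x /(_ ord0 I)].
have [P2 [[m2_prime [m2 P2E]] P2N]] : exists P2, Ass G P2 /\ P2 <> colon G m1.
  apply: contrapT => /forallNP noP2; apply: AssN; apply/seteqP; split=> [P0 AP0|_ ->].
    by apply: contrapT => P0N; apply: (noP2 P0).
  by split=> //; exists m1.
rewrite {}P2E in m2_prime P2N.
have GE := add_line_setI G_sub m1_prime m2_prime (nesym P2N).
have [Gm1 Gm2] := (prime_colon_notin m1_prime, prime_colon_notin m2_prime).
have [s1 dec1] := dec_line m1 m2 Gm1 Gm2 GE.
have [s2 dec2] := dec_line m2 m1 Gm2 Gm1 (etrans GE (setIC _ _)).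
by apply: G_nodec; rewrite GE; exists (s1 + s2)%N; apply: decomposable_setI.
Qed.

Lemma primary_decomposition_exists F : is_submodule F -> (exists m, ~ F m) ->
  exists s (P : 'I_s -> set R) (Q : 'I_s -> set M), primary_decomposition F P Q.
Proof.
move=> F_sub F_proper.
have ex : exists s, `[< decomposable F s >].
  by have [s dec] := decomposable_exists F_sub F_proper; exists s; apply/asboolP.
case: (ex_minnP ex) => -[|s] /asboolP [P [Q [Q_prim FE]]] s_min.
  by case: F_proper => m Fm; exfalso; apply Fm; rewrite FE => -[].
have s_lt (dec : decomposable F s) : False by have := s_min _ (asboolT dec); rewrite ltnn.
exists s.+1, P, Q; split=> // [i j Pij|j FE'].
  by apply: contrapT => ij; apply: s_lt (decomposable_merge Q_prim FE ij Pij).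
exact: s_lt (decomposable_drop Q_prim FE').
Qed.

End Existence.

Section Saturation.
Variables (R : comNzRingType) (M : lmodType R).
Variable P : set R.
Hypothesis P_prime : prime_ideal P.
Implicit Types (N F : set M).

(* The P-saturation S_P(N) of N, i.e. the contraction of the localisation N_P. *)
Definition saturation N := [set m | exists2 u, ~ P u & N (u *: m)].

Lemma saturation_submodule N : is_submodule N -> is_submodule (saturation N).
Proof.
have P1 := prime_neq1 P_prime.
move=> N_sub; split; first by exists 1; rewrite ?scaler0; last apply: submod0.
split=> [x y [u Pu Nux] [v Pv Nvy]|r x [u Pu Nux]].
  exists (u * v); first exact: prime_mulN.
  rewrite scalerDr -!scalerA (scaler_comm u v x).
  exact: submodD N_sub (submodZ _ N_sub Nux) (submodZ _ N_sub Nvy).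
by exists u; rewrite // scaler_comm; apply: submodZ.
Qed.

Lemma sub_saturation N : N `<=` saturation N.
Proof. by move=> x Nx; exists 1; rewrite ?scale1r //; apply: prime_neq1. Qed.

Lemma saturation_idem N : saturation (saturation N) `<=` saturation N.
Proof.
move=> x [u Pu [v Pv Nvux]]; exists (v * u); last by rewrite -scalerA.
exact: prime_mulN.
Qed.

Lemma saturation_sub_primary N P' Q : noetherian_ring R ->
  primary_for P' Q -> P' `<=` P -> N `<=` Q -> saturation N `<=` Q.
Proof.
move=> noethR Q_prim P'P NQ x [u Pu /NQ Qux].
by apply: (primary_cancel noethR Q_prim) Qux => /P'P.
Qed.

Lemma Ass_saturated_sub F P0 : saturation F `<=` F -> Ass F P0 -> P0 `<=` P.
Proof.
move=> F_sat [P0_prime [m P0E]] a P0a; apply: contrapT => Pa.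
rewrite P0E in P0_prime P0a.
by apply: (prime_colon_notin P0_prime); apply: F_sat; exists a.
Qed.

Lemma saturation_cons N h t x : is_submodule N ->
  saturation (addsub N (ispan P (h :: t))) h ->
  saturation (addsub N (ispan P (h :: t))) x -> saturation (addsub N (ispan P t)) x.
Proof.
move=> N_sub [u Pu [n [z [Nn [[p [y [Pp [ty ->]]]] uhE]]]]].
have S_sub := addsub_submodule N_sub (ispan_submodule t P_prime.1).
have [v Pv vhS] : exists2 v, ~ P v & addsub N (ispan P t) (v *: h).
  exists (u - p); first by move=> Pup; apply: Pu; rewrite -(subrK p u); apply: P_prime.1.2.1.
  by exists n, y; rewrite scalerBl uhE addrCA [_ + (n + y)]addrC addrK.
move=> [ux Pux [nx [zx [Nnx [[px [yx [Ppx [tyx ->]]]] uxE]]]]].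
exists (v * ux); first exact: prime_mulN.
have nyS : addsub N (ispan P t) (nx + yx) by exists nx, yx.
rewrite -scalerA uxE addrCA scalerDr scaler_comm.
exact: submodD S_sub (submodZ _ S_sub vhS) (submodZ _ S_sub nyS).
Qed.

Lemma saturationS A B : A `<=` B -> saturation A `<=` saturation B.
Proof. by move=> AB x [u Pu /AB Bux]; exists u. Qed.

(* Nakayama's lemma over the local ring R_P, for the module generated by [e]
   over N_P, stated without localising. *)
Lemma saturation_nakayama N e : is_submodule N ->
  (forall x, x \in e -> saturation (addsub N (ispan P e)) x) ->
  forall x, x \in e -> saturation N x.
Proof.
move=> N_sub; elim: e => [//|h t IH] he.
have he_t x : x \in h :: t -> saturation (addsub N (ispan P t)) x.
  by move=> /he; apply: saturation_cons N_sub (he h (mem_head _ _)).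
have tN : forall x, x \in t -> saturation N x.
  by apply: IH => x xt; apply: he_t; rewrite in_cons xt orbT.
have NtN : addsub N (ispan P t) `<=` saturation N.
  apply: addsub_sub (saturation_submodule N_sub) (@sub_saturation N) _.
  exact: ispan_sub (saturation_submodule N_sub) tN.
by move=> x /he_t /(saturationS NtN) /saturation_idem.
Qed.

Hypotheses (noethR : noetherian_ring R) (fgM : fin_gen_module M).

Lemma saturated_primary_mem N F x : is_submodule F -> saturation F `<=` F ->
  N `<=` F -> (forall a, P a -> F (a *: x)) ->
  (forall Q, primary_for P Q -> N `<=` Q -> Q x) -> F x.
Proof.
move=> F_sub F_sat NF PxF x_prim; apply: contrapT => Fx.
have [s [P' [Q dec]]] := primary_decomposition_exists noethR fgM F_sub (ex_intro _ x Fx).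
apply: Fx; have [Q_prim _ FE _] := dec; rewrite FE => i _.
have FQ : F `<=` Q i by rewrite FE => y; apply.
have P'P := Ass_saturated_sub F_sat (primary_decomposition_Ass noethR dec i).
have [P'E|/existsPNP [a Pa P'a]] := pselect (P `<=` P' i).
  have P'iE : P' i = P by apply/seteqP.
  by have := Q_prim i; rewrite P'iE => /x_prim; apply; apply: subset_trans FQ.
by apply: (primary_cancel noethR (Q_prim i) P'a); apply/FQ/PxF.
Qed.

(* For E the intersection of all P-primary submodules containing N, E lies in
   S_P(N + P E) by [saturated_primary_mem]; Nakayama then gives E in S_P(N). *)
Lemma bigcap_primary_sub_saturation N : is_submodule N ->
  \bigcap_(Q in [set Q | primary_for P Q /\ N `<=` Q]) Q `<=` saturation N.
Proof.
move=> N_sub; set E := \bigcap_(Q in _) Q.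
have E_sub : is_submodule E.
  split; first by move=> Q [[Q_sub _] _]; apply: submod0.
  split=> [x y Ex Ey Q CQ|r x Ex Q CQ]; first exact: submodD CQ.1.1 (Ex Q CQ) (Ey Q CQ).
  exact: submodZ CQ.1.1 (Ex Q CQ).
have /fin_gen_submoduleP [e EE] := fin_gen_noetherian noethR fgM E_sub.
have NPe_sub := addsub_submodule N_sub (ispan_submodule e P_prime.1).
have EF : E `<=` saturation (addsub N (ispan P e)).
  move=> x Ex; apply: (saturated_primary_mem (N := N)).
  - exact: saturation_submodule.
  - exact: saturation_idem.
  - by move=> y Ny; apply: sub_saturation; exists y, 0; rewrite addr0; do !split;
      [|apply: submod0 (ispan_submodule e P_prime.1)].
  - move=> a Pa; apply: sub_saturation; exists 0, (a *: x); rewrite add0r.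
    by do !split; [apply: submod0|apply: ispan_scale P_prime.1 Pa _; rewrite -EE].
  - by move=> Q Q_prim NQ; apply: Ex.
rewrite EE; apply: ispan_sub (saturation_submodule N_sub) _.
by apply: saturation_nakayama N_sub _ => x /span_mem; rewrite -EE => /EF.
Qed.

End Saturation.

Section Independence.
Variables (R : comNzRingType) (M : lmodType R).
Hypotheses (noethR : noetherian_ring R) (fgM : fin_gen_module M).
Implicit Types (N : set M) (X : set (set R)).

Definition primary_part X s (P : 'I_s -> set R) (Q : 'I_s -> set M) :=
  \bigcap_(i in [set i | X (P i)]) Q i.

Lemma primary_decomposition_Lambda N s (P : 'I_s -> set R) (Q : 'I_s -> set M) :
  primary_decomposition N P Q -> forall i, Lambda (P i) N (Q i).
Proof. by move=> dec i; exists s, P, Q; split=> //; exists i. Qed.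

Lemma primary_decomposition_setI N s (P : 'I_s -> set R) (Q : 'I_s -> set M) a Q2 :
  primary_decomposition N P Q -> primary_for (P a) Q2 -> N `<=` Q2 ->
  primary_decomposition N P (fun i => if i == a then Q a `&` Q2 else Q i).
Proof.
move=> dec Q2_prim NQ2; have [Q_prim P_inj NE N_irr] := dec.
have Q'_prim i : primary_for (P i) (if i == a then Q a `&` Q2 else Q i).
  by case: eqP => [->|_]; [apply: primary_setI|].
split=> // [|j].
  apply/seteqP; split=> [x Nx i _|x Qx].
    have Qx i' : Q i' x by move: Nx; rewrite NE => /(_ i' I).
    by case: eqP => _; [split; [apply: Qx|apply: NQ2]|apply: Qx].
  by rewrite NE => i _; have := Qx i I; case: eqP => [-> []|].
have [->|ja] := pselect (j = a).
  rewrite (eq_bigcapr (G := Q)); first exact: N_irr.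
  by move=> i ia; case: eqP => [/ia|].
move=> NE'; have [i [ij PiE]] := Ass_bigcap_primary (fun i _ => Q'_prim i) NE'
  (primary_decomposition_Ass noethR dec j).
exact/ij/P_inj.
Qed.

Lemma primary_part_not_sub N X s (P : 'I_s -> set R) (Q : 'I_s -> set M) b :
  primary_decomposition N P Q -> ~ X (P b) -> ~ primary_part X P Q `<=` Q b.
Proof.
move=> [_ _ NE N_irr] XPb LQb; apply: (N_irr b); apply/seteqP; split.
  by rewrite NE => x Nx i _; apply: Nx.
move=> x Qx; rewrite NE => i _; have [->|ib] := pselect (i = b); last exact: Qx.
by apply: LQb => j XPj; apply: Qx => jb; apply: XPb; rewrite -jb.
Qed.

Lemma primary_part_open N X S s (P : 'I_s -> set R) (Q : 'I_s -> set M) :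
  primary_decomposition N P Q -> X `<=` Ass N ->
  X = Ass N `&` [set P0 | ~ S `<=` P0] ->
  primary_part X P Q = [set m | forall P0, X P0 -> ~ colon N m `<=` P0].
Proof.
move=> dec XA XE; have [Q_prim _ NE _] := dec.
apply/seteqP; split=> m => [Lm P0 XP0 NmP0|NmX i XPi].
  have [P0_prime _] := XA _ XP0.
  have : \bigcap_(i in [set: 'I_s]) colon (Q i) m `<=` P0 by rewrite -colon_bigcap -NE.
  case/(prime_bigcap_sub P0_prime) => [i _|i [_ QiP0]]; first exact: colon_ideal (Q_prim i).1.
  have [XPi|XPi] := pselect (X (P i)).
    by apply: (prime_neq1 P0_prime); apply: QiP0; rewrite /colon /= scale1r; apply: Lm.
  have SPi : S `<=` P i.
    apply: contrapT => SPi; apply: XPi; rewrite XE; split=> //.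
    by have := primary_decomposition_Ass noethR dec i.
  move: XP0; rewrite XE => -[_]; apply.
  exact: subset_trans SPi (primary_colon_sub noethR (Q_prim i) P0_prime QiP0).
have /existsPNP [u Nmu Piu] := NmX _ XPi.
by apply: (primary_cancel noethR (Q_prim i) Piu); move: Nmu; rewrite /colon /= NE; apply.
Qed.

Lemma independent_generization N X s (P : 'I_s -> set R) (Q : 'I_s -> set M) a b :
  is_submodule N -> primary_decomposition N P Q -> independent_over N X ->
  P b `<=` P a -> X (P a) -> X (P b).
Proof.
move=> N_sub dec indep PbPa XPa; apply: contrapT => XPb.
have [Q_prim _ NE _] := dec.
have Pa_prime := primary_prime (Q_prim a).
have [m [Lm [Q2 [Q2_prim NQ2 Q2m]]]] : exists m, primary_part X P Q m /\
    exists Q2, [/\ primary_for (P a) Q2, N `<=` Q2 & ~ Q2 m].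
  apply: contrapT => /forallNP noQ2; apply: (primary_part_not_sub dec XPb) => m Lm.
  have NQb : N `<=` Q b by rewrite NE => x; apply.
  apply: (saturation_sub_primary noethR (Q_prim b) PbPa NQb).
  apply: (bigcap_primary_sub_saturation Pa_prime noethR fgM N_sub) => Q2 [Q2_prim NQ2].
  by apply: contrapT => Q2m; apply: (noQ2 m); split=> //; exists Q2.
have dec' := primary_decomposition_setI dec Q2_prim NQ2.
have LE := indep s P Q _ dec dec' (primary_decomposition_Lambda dec)
  (primary_decomposition_Lambda dec').
have : primary_part X P (fun i => if i == a then Q a `&` Q2 else Q i) m.
  by rewrite /primary_part -LE.
by move=> /(_ a XPa); rewrite eqxx => -[].
Qed.

End Independence.

Lemma open_generization_closed (R : comNzRingType) s (P : 'I_s -> set R) (A X : set (set R)) :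
  (forall i, prime_ideal (P i)) -> (forall P0, A P0 -> exists i, P0 = P i) ->
  X `<=` A -> (forall a b, P b `<=` P a -> X (P a) -> X (P b)) ->
  zariski_open_in A X.
Proof.
move=> P_prime AP XA X_gen; exists [set x | forall i, ~ X (P i) -> P i x].
apply/seteqP; split=> [P0 XP0|P0 [/AP [c ->] XPc]].
  split; first exact: XA.
  have [c P0E] := AP _ (XA _ XP0); rewrite P0E in XP0 *.
  move=> /(prime_bigcap_sub (P_prime c)) [i _|b [XPb PbPc]]; first exact: (P_prime i).1.
  exact/XPb/(X_gen c).
by apply: contrapT => XPc'; apply: XPc => x; apply.
Qed.

Theorem theorem2p2 (R : comNzRingType) (M : lmodType R) (N : set M)
    (X : set (set R)) :
  noetherian_ring R -> fin_gen_module M ->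
  is_submodule N -> fin_gen_submodule N -> N `<` [set: M] ->
  X `<=` Ass N ->
  (independent_over N X <-> zariski_open_in (Ass N) X).
Proof.
move=> noethR fgM N_sub _ [_ MN] XA.
have N_proper : exists m, ~ N m by apply/existsNP => Nall; apply: MN => m _; apply: Nall.
have [s [P [Q dec]]] := primary_decomposition_exists noethR fgM N_sub N_proper.
split=> [indep|[S XE] s' P' Q1 Q2 dec1 dec2 _ _].
  have [Q_prim _ NE _] := dec.
  apply: (open_generization_closed (P := P)) => //.
  - by move=> i; apply: primary_prime (Q_prim i).
  - by move=> P0 /(Ass_bigcap_primary (fun i _ => Q_prim i) NE) [i [_ ->]]; exists i.
  - by move=> a b; apply: independent_generization dec indep.
by rewrite -!/(primary_part X _ _) (primary_part_open noethR dec1 XA XE)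
  (primary_part_open noethR dec2 XA XE).
Qed.
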